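(* Let $p$ be a smooth function on $T^\ast(\mathbb{R}^n)\smallsetminus0$ with $\operatorname{Re}p=\xi_1$, and let $\gamma$ and $\gamma_j$, $j\ge1$, be bicharacteristics of $\operatorname{Re}p=\xi_1$ such that $\operatorname{Im}p$ strongly changes sign from $-$ to $+$ on $\gamma_j$ for each $j$. If $\gamma_j\dashrightarrow\gamma$ as $j\to\infty$, then $L_p(\gamma)\le\liminf_{j\to\infty}L_p(\gamma_j)$.
   Context: Write points of $T^\ast(\mathbb{R}^n)$ as $(x_1,x',\xi_1,\xi')$. A bicharacteristic of $\xi_1$ is $\gamma=[a,b]\times\{w_0\}=\{(t,x',0,\xi'):a\le t\le b\}$, $w_0=(x',0,\xi')$; write $g(t,w)$; $|\gamma|=b-a$. For $\gamma_j=[a_j,b_j]\times\{w_j\}$, $\gamma_j\dashrightarrow\gamma$ means $\liminf a_j\ge a$, $\limsup b_j\le b$, $w_j\to w_0$. $\operatorname{Im}p$ strongly changes sign from $-$ to $+$ on $[a,b]\times\{w_0\}$ if $\operatorname{Im}p(t,w_0)=0$ for $a\le t\le b$ and for every $\varepsilon>0$ there exist $a-\varepsilon<s_-<a$, $b<s_+<b+\varepsilon$ with $\operatorname{Im}p(s_-,w_0)<0<\operatorname{Im}p(s_+,w_0)$. If some sequence of bicharacteristics $\gamma_j$ of $\xi_1$ with this sign change satisfies $\gamma_j\dashrightarrow\gamma$, then $L_p(\gamma)=\inf\liminf_j|\gamma_j|$ over all such sequences. *)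

From HB Require Import structures.
From mathcomp Require Import all_boot all_order all_algebra.
From mathcomp Require Import all_classical all_reals all_analysis.
From mathcomp Require Import complex.
Set Implicit Arguments. Unset Strict Implicit. Unset Printing Implicit Defensive.
Import Order.TTheory GRing.Theory Num.Theory.
Import numFieldNormedType.Exports.
Local Open Scope classical_set_scope.
Local Open Scope ring_scope.

(* Points of T^*(R^n), n = m.+1, written ((x1, x'), (xi1, xi')). *)
Notation cotan R m := ((R * 'rV[R]_m) * (R * 'rV[R]_m))%type.

Definition cotan0 (R : realType) (m : nat) : set (cotan R m) :=
  [set z | z.2 != 0].
Arguments cotan0 R m : clear implicits.

Fixpoint iter_dd (R : realType) (V : normedModType R) (vs : seq V) (f : V -> R)
  : V -> R :=
  match vs with
  | [::] => f
  | v :: vs' => fun x => 'D_v (iter_dd vs' f) x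
  end.

Definition smooth_on (R : realType) (V : normedModType R) (U : set V)
  (f : V -> R) : Prop :=
  forall vs : seq V, forall x, U x ->
    (forall v : V, derivable (iter_dd vs f) x v) /\
    {for x, continuous (iter_dd vs f)}.

(* a bicharacteristic [a,b] x {w0} of xi1, w0 = (x', 0, xi'), xi' <> 0 *)
Record bichar (R : realType) (m : nat) := Bichar {
  bc_a : R; bc_b : R; bc_x : 'rV[R]_m; bc_xi : 'rV[R]_m;
  bc_ab : bc_a <= bc_b; bc_xi0 : bc_xi != 0 }.

Definition gpt (R : realType) (m : nat) (t : R) (x' xi' : 'rV[R]_m) : cotan R m :=
  ((t, x'), (0, xi')).

Definition bc_len (R : realType) (m : nat) (g : bichar R m) : R := bc_b g - bc_a g.

Definition strong_sign_change (R : realType) (m : nat) (p : cotan R m -> R[i])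
  (g : bichar R m) : Prop :=
  (forall t, bc_a g <= t <= bc_b g -> complex.Im (p (gpt t (bc_x g) (bc_xi g))) = 0) /\
  (forall e : R, 0 < e -> exists sm sp : R,
      [/\ bc_a g - e < sm < bc_a g, bc_b g < sp < bc_b g + e,
          complex.Im (p (gpt sm (bc_x g) (bc_xi g))) < 0 &
          0 < complex.Im (p (gpt sp (bc_x g) (bc_xi g)))]).

Definition bc_conv (R : realType) (m : nat) (gs : nat -> bichar R m)
  (g : bichar R m) : Prop :=
  ((bc_a g)%:E <= limn_einf (fun j => (bc_a (gs j))%:E))%E /\
  (limn_esup (fun j => (bc_b (gs j))%:E) <= (bc_b g)%:E)%E /\
  ((fun j => bc_x (gs j)) @ \oo --> bc_x g) /\
  ((fun j => bc_xi (gs j)) @ \oo --> bc_xi g).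

(* L_p(gamma) = inf liminf |gamma_j| over all sequences with sign change
   converging to gamma (value +oo if there is no such sequence) *)
Definition Lp (R : realType) (m : nat) (p : cotan R m -> R[i]) (g : bichar R m)
  : \bar R :=
  ereal_inf [set l | exists gs : nat -> bichar R m,
     [/\ forall j, strong_sign_change p (gs j), bc_conv gs g &
         l = limn_einf (fun j => (bc_len (gs j))%:E)]].

From HB Require Import structures.
From mathcomp Require Import all_boot all_order all_algebra.
From mathcomp Require Import all_classical all_reals all_analysis.
From mathcomp Require Import complex.
From mathcomp Require Import lra.
Import Order.TTheory GRing.Theory Num.Theory.
Import numFieldNormedType.Exports.
Local Open Scope classical_set_scope.
Local Open Scope ring_scope.

(* Lower semicontinuity of L_p is a diagonal argument.  If liminf L_p(gamma_j)
   < c, then for infinitely many j there is a sign-changing gamma'_j within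
   1/(j+1) of gamma_j with |gamma'_j| < c; keeping gamma'_j := gamma_j for the
   other j, the sequence gamma'_j still converges to gamma, has the sign
   change, and liminf |gamma'_j| <= c, whence L_p(gamma) <= c. *)

Section limn_einf_bounds.
Context {R : realType}.
Implicit Types (u : (\bar R)^nat) (x : \bar R).
Local Open Scope ereal_scope.

Lemma limn_einfE u : limn_einf u = ereal_sup (range (einfs u)).
Proof. by rewrite limn_einf_lim; apply/cvg_lim => //; exact: cvg_einfs_sup. Qed.

Lemma lt_limn_einf {x u} : x < limn_einf u -> \forall n \near \oo, x < u n.
Proof.
rewrite limn_einfE => /ereal_sup_gt [_ [N _ <-]] xN.
exists N => // n Nn; apply: (lt_le_trans xN).
by apply: ereal_inf_lbound; exists n.
Qed.

Lemma limn_einf_ge {x u} : (\forall n \near \oo, x <= u n) -> x <= limn_einf u.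
Proof.
move=> [N _ xu]; rewrite limn_einfE.
apply: (le_trans _ (ereal_sup_ubound (ex_intro2 _ _ N I erefl))).
by apply: le_ereal_inf_tmp => _ [n /= Nn <-]; exact: xu.
Qed.

Lemma limn_einf_lt {x u} : limn_einf u < x ->
  forall N, exists2 n, (N <= n)%N & u n < x.
Proof.
rewrite limn_einfE => ux N.
have /ereal_inf_lt [_ [n /= Nn <-] unx] : einfs u N < x.
  by apply: le_lt_trans ux; apply: ereal_sup_ubound; exists N.
by exists n.
Qed.

Lemma limn_einf_le {x u} : (forall N, exists2 n, (N <= n)%N & u n <= x) ->
  limn_einf u <= x.
Proof.
move=> ux; rewrite limn_einfE; apply: ge_ereal_sup => _ [N _ <-].
have [n Nn unx] := ux N; apply: le_trans unx.
by apply: ereal_inf_lbound; exists n.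
Qed.

Lemma EFin_le_limn_einfP (u : R^nat) (r : R) :
  r%:E <= limn_einf (fun n => (u n)%:E) <->
  forall e, (0 < e)%R -> \forall n \near \oo, (r - e < u n)%R.
Proof.
split=> [ru e e0 | ru].
  have /lt_limn_einf : (r - e)%:E < limn_einf (fun n => (u n)%:E).
    by apply: lt_le_trans ru; rewrite lte_fin ltrBlDr ltrDl.
  by apply: filterS => n; rewrite lte_fin.
apply/lee_addgt0Pr => e e0; rewrite -leeBlDr // -EFinB.
apply: limn_einf_ge; apply: filterS (ru e e0) => n.
by rewrite lee_fin => /ltW.
Qed.

Lemma limn_esup_le_EFinP (u : R^nat) (r : R) :
  limn_esup (fun n => (u n)%:E) <= r%:E <->
  forall e, (0 < e)%R -> \forall n \near \oo, (u n < r + e)%R.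
Proof.
have -> : limn_esup (fun n => (u n)%:E) = - limn_einf (fun n => (- u n)%R%:E).
  by rewrite -limn_esupN; congr limn_esup; apply/funext => n /=; rewrite opprK.
rewrite leeNl -EFinN EFin_le_limn_einfP.
by split=> ur e /ur; apply: filterS => n; rewrite -opprD ltrN2.
Qed.

End limn_einf_bounds.

Lemma lee_real_ubounds (R : realType) (x y : \bar R) :
  (forall c : R, (y < c%:E)%E -> (x <= c%:E)%E) -> (x <= y)%E.
Proof.
case: y => [r | | ] xc.
- by apply/lee_addgt0Pr => e e0; rewrite -EFinD xc // lte_fin ltrDl.
- exact: leey.
- by rewrite (eq_ninfty (fun c => xc c (ltNyr c))).
Qed.

Section bichar_near.
Context {R : realType} {m : nat}.
Implicit Types (e : R) (g h k : bichar R m) (gs : nat -> bichar R m).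

Definition bc_near e h g :=
  [/\ bc_a g - e < bc_a h, bc_b h < bc_b g + e,
      `|bc_x g - bc_x h| < e & `|bc_xi g - bc_xi h| < e].

Lemma bc_near_refl e g : 0 < e -> bc_near e g g.
Proof. by move=> e0; split; rewrite ?subrr ?normr0 // ?ltrBlDr ltrDl. Qed.

Lemma bc_near_le e1 e2 h g : e1 <= e2 -> bc_near e1 h g -> bc_near e2 h g.
Proof. by move=> e12 [ha hb hx hxi]; split; lra. Qed.

Lemma bc_near_trans e1 e2 h k g :
  bc_near e1 h k -> bc_near e2 k g -> bc_near (e1 + e2) h g.
Proof.
move=> [ha hb hx hxi] [ka kb kx kxi]; split; [lra | lra | |].
- by rewrite (le_lt_trans (ler_distD (bc_x k) _ _)) // addrC ltrD.
- by rewrite (le_lt_trans (ler_distD (bc_xi k) _ _)) // addrC ltrD.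
Qed.

Lemma bc_convP gs g :
  bc_conv gs g <-> forall e, 0 < e -> \forall n \near \oo, bc_near e (gs n) g.
Proof.
split=> [[/EFin_le_limn_einfP ca [/limn_esup_le_EFinP cb
          [/cvgrPdist_lt cx /cvgrPdist_lt cxi]]] e e0 | near_g].
  by near=> n; split; near: n; [exact: ca | exact: cb | exact: cx | exact: cxi].
split; [|split; [|split]].
- by apply/EFin_le_limn_einfP => e /near_g; apply: filterS => n [].
- by apply/limn_esup_le_EFinP => e /near_g; apply: filterS => n [].
- by apply/cvgrPdist_lt => e /near_g; apply: filterS => n [].
- by apply/cvgrPdist_lt => e /near_g; apply: filterS => n [].
Unshelve. all: by end_near. Qed.

End bichar_near.

Section Lp_lower_semicontinuous.
Context {R : realType} {m : nat} (p : cotan R m -> R[i]).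
Implicit Types (c e : R) (g : bichar R m) (gs : nat -> bichar R m).

Lemma Lp_lt_approx g c e : (Lp p g < c%:E)%E -> 0 < e ->
  exists h, [/\ strong_sign_change p h, bc_near e h g & bc_len h < c].
Proof.
move=> /ereal_inf_lt [_ [hs [hs_sign /bc_convP hs_g ->]] hs_len] e0.
have [N _ near_g] := hs_g e e0.
have [n Nn] := limn_einf_lt hs_len N; rewrite lte_fin => len_n.
by exists (hs n); split => //; exact: near_g.
Qed.

Lemma Lp_le_frequently g gs c :
  (forall j, strong_sign_change p (gs j)) -> bc_conv gs g ->
  (forall N, exists2 j, (N <= j)%N & (Lp p (gs j) < c%:E)%E) ->
  (Lp p g <= c%:E)%E.
Proof.
move=> gs_sign /bc_convP gs_g often_lt.
pose eps j : R := j.+1%:R^-1.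
have eps_gt0 j : 0 < eps j by rewrite invr_gt0 ltr0n.
have approx j : exists h, [/\ strong_sign_change p h,
    bc_near (eps j) h (gs j) & (Lp p (gs j) < c%:E)%E -> bc_len h < c].
  have [/Lp_lt_approx/(_ (eps_gt0 j)) [h [h_sign h_near h_len]] | not_lt] :=
    pselect (Lp p (gs j) < c%:E)%E.
    by exists h.
  by exists (gs j); split=> [|| /not_lt]; [exact: gs_sign | exact: bc_near_refl |].
have [h /all_and3 [h_sign h_near h_len]] := choice approx.
have h_g : bc_conv h g.
  apply/bc_convP => e e0; have e20 : 0 < e / 2 by rewrite divr_gt0.
  near=> n; rewrite [e]splitr; apply: bc_near_trans (_ : bc_near _ (gs n) _).
    apply: bc_near_le (h_near n); apply: ltW.
    by near: n; exact: (near_infty_natSinv_lt (PosNum e20)).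
  by near: n; exact: gs_g.
have often_short N : exists2 n, (N <= n)%N & ((bc_len (h n))%:E <= c%:E)%E.
  by have [j Nj /h_len lt_c] := often_lt N; exists j; rewrite // lee_fin ltW.
apply: (@le_trans _ _ (limn_einf (fun n => (bc_len (h n))%:E))); last first.
  exact: limn_einf_le often_short.
by apply: ereal_inf_lbound; exists h; split.
Unshelve. all: by end_near. Qed.

End Lp_lower_semicontinuous.

Theorem lemma2p15 (R : realType) (m : nat) (p : cotan R m -> R[i])
  (g : bichar R m) (gs : nat -> bichar R m) :
  smooth_on (cotan0 R m) (fun z => complex.Re (p z)) ->
  smooth_on (cotan0 R m) (fun z => complex.Im (p z)) ->
  (forall z, cotan0 R m z -> complex.Re (p z) = z.2.1) ->
  (forall j, strong_sign_change p (gs j)) ->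
  bc_conv gs g ->
  (Lp p g <= limn_einf (fun j => Lp p (gs j)))%E.
Proof.
move=> _ _ _ gs_sign gs_g; apply: lee_real_ubounds => c /limn_einf_lt often_lt.
exact: Lp_le_frequently gs_sign gs_g often_lt.
Qed.
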